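(* Let $(\mathbb X,S)$ be the subshift generated by a primitive substitution $\vartheta$ on a finite alphabet $\mathcal A$, let $(\mathbb X',S')$ be a $p$-periodic subshift over a finite alphabet, let $T=S\times S'$ on $\mathbb X\times\mathbb X'$, let $\rho$ be a $T$-ergodic Borel probability measure on $\mathbb X\times\mathbb X'$, and let $f:\mathbb X\times\mathbb X'\to\mathbb R$ be locally constant, i.e. $f(x,x')=g(x_n\cdots x_{n+k-1},x')$ for some $n\in\mathbb Z$, $k\in\mathbb N$, $g$. Assume there is a word $u\in\mathcal L(\mathbb X)$ with $\operatorname{ind}(u)>3$ such that $p$ divides $|\vartheta^n(u)|$ for infinitely many $n$. Then for $\rho$-almost every $\omega\in\mathbb X\times\mathbb X'$, the operator $H_\omega=\Delta+V_\omega$, $V_\omega(j)=f(T^j\omega)$, has no eigenvalues.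
   Context: $\Delta$ is the discrete Laplacian $(\Delta\psi)(n)=\psi(n+1)+\psi(n-1)$. The subshift of a substitution $\vartheta:\mathcal A\to\mathcal A^+$ is $\mathbb X_\vartheta=\{x\in\mathcal A^{\mathbb Z}:$ every finite subword of $x$ is a subword of some $\vartheta^m(a)$, $m\in\mathbb N$, $a\in\mathcal A\}$; $\vartheta$ is primitive if some power $\vartheta^N$ maps every letter to a word containing every letter. A $p$-periodic subshift is the set of translates of one $p$-periodic sequence. $\mathcal L(\mathbb X)$ is the set of finite words occurring in $\mathbb X$. For a word $u$ and $r=n+\ell/|u|$ with $n\in\mathbb Z_+$, $0\le\ell<|u|$, $u^r=u^nu_1\cdots u_\ell$; $\operatorname{ind}(u)=\sup\{r\in\frac1{|u|}\mathbb Z_+:u^r\in\mathcal L(\mathbb X)\}$. *)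

From HB Require Import structures.
From mathcomp Require Import all_boot all_order all_algebra.
From mathcomp Require Import all_classical all_reals all_analysis.
From mathcomp Require Import complex.

Set Implicit Arguments.
Unset Strict Implicit.
Unset Printing Implicit Defensive.

Import Order.TTheory GRing.Theory Num.Theory.
Local Open Scope classical_set_scope.
Local Open Scope ring_scope.

Section Words.
Variable A : finType.

Definition is_substitution (theta : A -> seq A) : Prop :=
  forall a, (0 < size (theta a))%N.

Definition subst_word (theta : A -> seq A) (w : seq A) : seq A :=
  flatten (map theta w).

Definition subst_iter (theta : A -> seq A) (m : nat) (w : seq A) : seq A :=
  iter m (subst_word theta) w.

Definition primitive (theta : A -> seq A) : Prop :=
  exists N : nat, forall a b : A, b \in subst_iter theta N [:: a].

Definition wfactor (x : int -> A) (i : int) (len : nat) : seq A :=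
  [seq x (i + (j%:Z)) | j <- iota 0 len].

Definition subshift_of (theta : A -> seq A) : set (int -> A) :=
  [set x | forall (i : int) (len : nat),
     exists (m : nat) (a : A), infix (wfactor x i len) (subst_iter theta m [:: a])].

Definition language (X : set (int -> A)) : set (seq A) :=
  [set w | exists2 x, X x & exists i : int, w = wfactor x i (size w)].

(* u^r with r = m / |u|: the prefix of length m of u u u ... *)
Definition wpow (u : seq A) (m : nat) : seq A := take m (flatten (nseq m u)).

Definition index_word (R : realType) (X : set (int -> A)) (u : seq A) : \bar R :=
  ereal_sup [set ((m%:R / (size u)%:R : R)%:E) | m in [set m : nat | language X (wpow u m)]].

End Words.

(* shift of a bi-infinite sequence: (shiftZ j x)_n = x_{n+j}, so shiftZ 1 = S *)
Definition shiftZ (B : Type) (j : int) (x : int -> B) : int -> B :=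
  fun n => x (n + j).

(* a p-periodic subshift: the set of translates of one p-periodic sequence *)
Definition periodic_subshift (B : Type) (p : nat) (y : int -> B) : set (int -> B) :=
  [set shiftZ j y | j in [set: int]].

Definition is_periodic (B : Type) (p : nat) (y : int -> B) : Prop :=
  (0 < p)%N /\ forall n : int, y (n + p%:Z) = y n.

(* Ambient space A^Z x A'^Z; the points a0, b0 only serve to make the type
   pointed, as required by MathComp-Analysis' measurable types. *)
Definition Omega (A A' : finType) (a0 : A) (b0 : A') : Type :=
  ((int -> A) * (int -> A'))%type.

Section OmegaInstances.
Variables (A A' : finType) (a0 : A) (b0 : A').
HB.instance Definition _ := gen_eqMixin (Omega a0 b0).
HB.instance Definition _ := gen_choiceMixin (Omega a0 b0).
HB.instance Definition _ :=
  isPointed.Build (Omega a0 b0) ((fun _ => a0), (fun _ => b0)).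

(* cylinder (coordinate) sets; they generate the Borel sigma-algebra of the
   product topology of the discrete finite alphabets *)
Definition cylinders : set (set (Omega a0 b0)) :=
  [set E | exists (n : int) (a : A), E = [set w | w.1 n = a]] `|`
  [set E | exists (n : int) (b : A'), E = [set w | w.2 n = b]].
End OmegaInstances.

Definition OmegaM (A A' : finType) (a0 : A) (b0 : A') :=
  g_sigma_algebraType (@cylinders A A' a0 b0).

Definition Tshift (A A' : finType) (a0 : A) (b0 : A') (j : int)
  (w : OmegaM a0 b0) : OmegaM a0 b0 := (shiftZ j w.1, shiftZ j w.2).

Section Schrodinger.
Variable R : realType.
Local Open Scope complex_scope.

Definition sqnorm (z : R[i]) : R := (complex.Re `|z|) ^+ 2.

Definition l2Z (psi : int -> R[i]) : Prop :=
  (\sum_(0 <= n <oo) ((sqnorm (psi n%:Z) + sqnorm (psi (- (n.+1)%:Z)))%:E) < +oo)%E.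

Definition is_eigenvalue (V : int -> R) (E : R[i]) : Prop :=
  exists psi : int -> R[i],
    [/\ l2Z psi, exists n, psi n != 0 &
        forall n : int, psi (n + 1) + psi (n - 1) + (V n)%:C * psi n = E * psi n].

Definition has_no_eigenvalues (V : int -> R) : Prop :=
  forall E : R[i], ~ is_eigenvalue V E.
End Schrodinger.

(* A solution of H psi = E psi is propagated by unimodular 2x2 transfer
   matrices.  If the potential is q-periodic on [c - q, c + 2q), the transfer
   matrix M over one period satisfies M^2 - (tr M) M + 1 = 0, which bounds
   |psi c| and |psi (c - 1)| by values of psi at distance about q from c; for an
   l^2 solution these are small when q is large, so cubes of unbounded period
   centred at c force psi = 0 (Gordon's argument).
   Since ind(u) > 3, the word u u u a (a the first letter of u) is in the
   language, and by primitivity th^n(u u u a) occurs in every point of X within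
   a window of length O(|th^n a|).  By invariance of rho, this yields cubes of
   period q = |th^n u| around the origin on a set of measure bounded below
   uniformly in n; when p divides q the periodic coordinate is q-periodic too,
   so the potential inherits these cubes.  The limsup of these sets has
   positive measure, its orbit is invariant, hence of full measure by
   ergodicity, and Gordon's argument applies at each of its points. *)

From HB Require Import structures.
From mathcomp Require Import all_boot all_order all_algebra.
From mathcomp Require Import all_classical all_reals all_analysis.
From mathcomp Require Import complex.
From mathcomp Require Import zify ring lra.

Set Implicit Arguments.
Unset Strict Implicit.
Unset Printing Implicit Defensive.

Import Order.TTheory GRing.Theory Num.Theory.
Local Open Scope classical_set_scope.
Local Open Scope ring_scope.

(** * Gordon's argument *)

Section ComplexModulus.
Variable R : realType.
Local Open Scope complex_scope.

Definition modc (z : R[i]) : R := complex.Re `|z|.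

Lemma normc_modc (z : R[i]) : `|z| = (modc z)%:C.
Proof. by rewrite /modc normc_def. Qed.

Lemma modc_ge0 (z : R[i]) : 0 <= modc z.
Proof. by have := normr_ge0 z; rewrite normc_modc lecR. Qed.

Lemma modc_eq0 (z : R[i]) : modc z = 0 -> z = 0.
Proof. by move=> h; apply/eqP; rewrite -normr_eq0 normc_modc h. Qed.

Lemma modcD (z w : R[i]) : modc (z + w) <= modc z + modc w.
Proof. by have := ler_normD z w; rewrite !normc_modc -rmorphD lecR. Qed.

Lemma modcM (z w : R[i]) : modc (z * w) = modc z * modc w.
Proof. by apply: complexI; rewrite rmorphM -!normc_modc normrM. Qed.

Lemma modcB (z w : R[i]) : modc (z - w) <= modc z + modc w.
Proof.
have modcN : modc (- w) = modc w by apply: complexI; rewrite -!normc_modc normrN.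
by rewrite -modcN modcD.
Qed.

Lemma l2Z_modc_small (psi : int -> R[i]) : l2Z psi ->
  forall eps : R, 0 < eps ->
  exists N : nat, forall n : int, (N%:Z <= `|n|)%R -> modc (psi n) < eps.
Proof.
move=> psi2 eps eps0.
pose a k := sqnorm (psi k%:Z) + sqnorm (psi (- (k.+1)%:Z)).
have a_ge0 k : 0 <= a k by rewrite /a /sqnorm addr_ge0 // sqr_ge0.
have /cvg_series_cvg_0/cvgr0_norm_lt/(_ _ (mulr_gt0 eps0 eps0)) [N _ aN] :=
  nnseries_is_cvg a_ge0 psi2.
have modc_lt z : sqnorm z < eps * eps -> modc z < eps.
  rewrite /sqnorm -/(modc z) => lt_sq; rewrite ltNge; apply/negP => le_eps.
  by have := ler_pM (ltW eps0) (ltW eps0) le_eps le_eps; rewrite -expr2; lra.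
have sq_ge0 (z : R[i]) : 0 <= sqnorm z by exact: sqr_ge0.
exists N.+1 => -[] k /= Nk; apply: modc_lt.
- have /= := aN k; rewrite ger0_norm // /a => /(_ ltac:(rewrite /=; lia)).
  by have := sq_ge0 (psi (- (k.+1)%:Z)); lra.
- have /= := aN k; rewrite ger0_norm // /a NegzE => /(_ ltac:(rewrite /=; lia)).
  by have := sq_ge0 (psi k%:Z); lra.
Qed.

End ComplexModulus.

Definition periodic_on (B : Type) (x : int -> B) (i : int) (len q : nat) : Prop :=
  forall j : nat, (j < len)%N -> x (i + j%:Z) = x (i + j%:Z + q%:Z).

Lemma periodic_on_sub (B : Type) (x : int -> B) (i i' : int) (len len' q : nat) :
  (i <= i')%R -> (i' + len'%:Z <= i + len%:Z)%R ->
  periodic_on x i len q -> periodic_on x i' len' q.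
Proof.
move=> le_ii' le_end xper j lt_j.
have [d def_d] : exists d : nat, i' - i = d%:Z by exists `|i' - i|%N; lia.
have := xper (d + j)%N ltac:(lia).
by have -> : i + (d + j)%N%:Z = i' + j%:Z by lia.
Qed.

Section TransferMatrices.
Variable R : realType.
Local Open Scope complex_scope.
Local Notation C := R[i].

(* (a, b, c, d) stands for the matrix [[a, b], [c, d]]. *)
Definition mx2 := (C * C * C * C)%type.

Definition mx2_mul (X Y : mx2) : mx2 :=
  let: (a, b, c, d) := X in let: (a', b', c', d') := Y in
  (a * a' + b * c', a * b' + b * d', c * a' + d * c', c * b' + d * d').

Definition mx2_app (X : mx2) (v : C * C) : C * C :=
  let: (a, b, c, d) := X in (a * v.1 + b * v.2, c * v.1 + d * v.2).

Definition mx2_det (X : mx2) : C := let: (a, b, c, d) := X in a * d - b * c.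

Definition mx2_tr (X : mx2) : C := let: (a, b, c, d) := X in a + d.

Lemma mx2_appM X Y v : mx2_app (mx2_mul X Y) v = mx2_app X (mx2_app Y v).
Proof.
case: X Y v => [[[a b] c] d] [[[a' b'] c'] d'] [u v] /=.
by congr pair; ring.
Qed.

Lemma mx2_detM X Y : mx2_det (mx2_mul X Y) = mx2_det X * mx2_det Y.
Proof. by case: X Y => [[[a b] c] d] [[[a' b'] c'] d'] /=; ring. Qed.

Lemma mx2_Cayley_Hamilton X v : mx2_det X = 1 ->
  mx2_app X (mx2_app X v) =
  (mx2_tr X * (mx2_app X v).1 - v.1, mx2_tr X * (mx2_app X v).2 - v.2).
Proof.
move=> detX; rewrite -[v.1]mul1r -[v.2]mul1r -{1 2}detX.
by case: X {detX} v => [[[a b] c] d] [u v] /=; congr pair; ring.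
Qed.

Variables (V : int -> R) (E : C).

Definition transfer (n : int) : mx2 := (E - (V n)%:C, -1, 1, 0).

Fixpoint transfer_prod (s : int) (m : nat) : mx2 :=
  if m is m'.+1 then mx2_mul (transfer (s + m'%:Z)) (transfer_prod s m')
  else (1, 0, 0, 1).

Lemma transfer_prod_det s m : mx2_det (transfer_prod s m) = 1.
Proof.
elim: m => [|m IH]; first by rewrite /= mulr1 mulr0 subr0.
by rewrite mx2_detM IH mulr1 /=; ring.
Qed.

Lemma transfer_prod_periodic s m q :
  periodic_on V s m q -> transfer_prod (s + q%:Z) m = transfer_prod s m.
Proof.
elim: m => [|m IH] //= Vper.
rewrite IH; last by move=> j lt_jm; apply: Vper; lia.
by rewrite /transfer addrAC -Vper.
Qed.

Variable psi : int -> C.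
Hypothesis psi_eq : forall n : int,
  psi (n + 1) + psi (n - 1) + (V n)%:C * psi n = E * psi n.

Definition solution_vector (n : int) : C * C := (psi n, psi (n - 1)).

Lemma solution_vectorS n :
  solution_vector (n + 1) = mx2_app (transfer n) (solution_vector n).
Proof.
rewrite /solution_vector /= addrK mul1r mul0r addr0; congr pair.
have -> : psi (n + 1) = E * psi n - psi (n - 1) - (V n)%:C * psi n.
  by rewrite -psi_eq; ring.
by ring.
Qed.

Lemma solution_vector_transfer s m :
  solution_vector (s + m%:Z) = mx2_app (transfer_prod s m) (solution_vector s).
Proof.
elim: m => [|m IH]; first by rewrite /= addr0 !mul1r !mul0r addr0 add0r.
by rewrite mx2_appM -IH -solution_vectorS -addrA -PoszD addn1.
Qed.

End TransferMatrices.

Section Gordon.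
Variable R : realType.
Local Open Scope complex_scope.
Local Notation C := R[i].

Lemma three_term_bound (t x y z w : C) :
  z = t * y - x -> y = t * x - w -> modc x <= modc y + modc z + modc w.
Proof.
move=> def_z def_y.
have y0 := modc_ge0 y; have z0 := modc_ge0 z; have w0 := modc_ge0 w.
have [le_t1|gt_t1] := lerP (modc t) 1.
- have := modcB (t * y) z; rewrite def_z opprB addrC subrK modcM.
  by have := ler_piMl y0 le_t1; lra.
- have := modcD y w; rewrite def_y subrK modcM.
  by have := ler_peMl (modc_ge0 x) (ltW gt_t1); lra.
Qed.

Variables (V : int -> R) (E : C) (psi : int -> C).
Hypothesis psi_eq : forall n : int,
  psi (n + 1) + psi (n - 1) + (V n)%:C * psi n = E * psi n.

(* Cayley-Hamilton for the transfer matrix M over one period gives, with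
   Phi := solution_vector psi, Phi(c+2q) + Phi(c) = (tr M) Phi(c+q) and
   Phi(c+q) + Phi(c-q) = (tr M) Phi(c). *)
Lemma solution_cube_bound (c : int) (q : nat) :
  periodic_on V (c - q%:Z) (2 * q)%N q ->
  modc (psi c) <=
    modc (psi (c + q%:Z)) + modc (psi (c + q%:Z + q%:Z)) + modc (psi (c - q%:Z)) /\
  modc (psi (c - 1)) <=
    modc (psi (c + q%:Z - 1)) + modc (psi (c + q%:Z + q%:Z - 1))
    + modc (psi (c - q%:Z - 1)).
Proof.
move=> Vper; set M := transfer_prod V E c q.
have Vper_left : periodic_on V (c - q%:Z) q q by apply: periodic_on_sub Vper; lia.
have Vper_right : periodic_on V c q q by apply: periodic_on_sub Vper; lia.
have sv1 : solution_vector psi (c + q%:Z) = mx2_app M (solution_vector psi c).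
  exact: (solution_vector_transfer psi_eq).
have sv2 : solution_vector psi (c + q%:Z + q%:Z) =
    mx2_app M (solution_vector psi (c + q%:Z)).
  by rewrite (solution_vector_transfer psi_eq) transfer_prod_periodic.
have sv0 : solution_vector psi c = mx2_app M (solution_vector psi (c - q%:Z)).
  rewrite -{1}(subrK q%:Z c) (solution_vector_transfer psi_eq) /M.
  by rewrite -(transfer_prod_periodic E Vper_left) subrK.
have detM : mx2_det M = 1 by exact: transfer_prod_det.
have := mx2_Cayley_Hamilton (solution_vector psi c) detM.
have := mx2_Cayley_Hamilton (solution_vector psi (c - q%:Z)) detM.
rewrite -sv0 -sv1 -sv2 /solution_vector /= => -[rec1 rec1'] [rec2 rec2'].
by split; apply: three_term_bound; eassumption.
Qed.

Lemma solution_eq0 (c : int) : psi c = 0 -> psi (c - 1) = 0 -> forall n, psi n = 0.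
Proof.
move=> psi_c psi_c1.
have fwd m : psi (c + m%:Z) = 0 /\ psi (c + m%:Z - 1) = 0.
  elim: m => [|m [IH IH1]]; first by rewrite addr0.
  have := psi_eq (c + m%:Z); rewrite IH IH1 !mulr0 !addr0.
  by rewrite -[m.+1]addn1 PoszD addrA addrK.
have bwd m : psi (c - m%:Z) = 0 /\ psi (c - m%:Z - 1) = 0.
  elim: m => [|m [IH IH1]]; first by rewrite subr0.
  have := psi_eq (c - m%:Z - 1); rewrite subrK IH IH1 !mulr0 add0r !addr0.
  by rewrite -[m.+1]addn1 PoszD opprD addrA.
move=> n; case: (lerP c n) => [le_cn | lt_nc].
- have [m ->] : exists m : nat, n = c + m%:Z by exists `|n - c|%N; lia.
  exact: (fwd m).1.
- have [m ->] : exists m : nat, n = c - m%:Z by exists `|c - n|%N; lia.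
  exact: (bwd m).1.
Qed.

End Gordon.

Theorem gordon_no_eigenvalues (R : realType) (V : int -> R) (c : int) :
  (forall N : nat, exists2 q : nat, (N <= q)%N & periodic_on V (c - q%:Z) (2 * q)%N q) ->
  has_no_eigenvalues V.
Proof.
move=> cubes E [psi [psi2 [n0 psi_n0] psi_eq]].
suff psi_small m : m = c \/ m = c - 1 -> forall eps, 0 < eps -> modc (psi m) <= 3%:R * eps.
  have psi0 m : m = c \/ m = c - 1 -> psi m = 0.
    move=> hm; apply: modc_eq0; apply/eqP; rewrite eq_le modc_ge0 andbT leNgt.
    apply/negP => psi_m_gt0.
    by have := psi_small m hm _ (divr_gt0 psi_m_gt0 (ltr0n _ 4)); lra.
  move/eqP: psi_n0; apply; apply: (solution_eq0 psi_eq (psi0 _ _) (psi0 _ _)).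
  - by left.
  - by right.
move=> hm eps eps0.
have [N psiN] := l2Z_modc_small psi2 eps0.
have [q le_q Vper] := cubes (N + `|c|%N + 2)%N.
have far n : (N%:Z <= `|n|)%R -> modc (psi n) <= eps by move=> /psiN /ltW.
have [bnd bnd1] := solution_cube_bound psi_eq Vper.
case: hm => ->.
- have := far (c + q%:Z) ltac:(lia); have := far (c + q%:Z + q%:Z) ltac:(lia).
  by have := far (c - q%:Z) ltac:(lia); lra.
- have := far (c + q%:Z - 1) ltac:(lia); have := far (c + q%:Z + q%:Z - 1) ltac:(lia).
  by have := far (c - q%:Z - 1) ltac:(lia); lra.
Qed.

(** * The shift space and invariant measures *)

Lemma countable_bigcapT_measurable d (T : measurableType d) (U : countType)
    (F : U -> set T) :
  (forall i, measurable (F i)) -> measurable (\bigcap_i F i).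
Proof.
move=> mF; rewrite -[X in measurable X]setCK setC_bigcap; apply: measurableC.
by apply: countable_bigcupT_measurable => [|i]; [exact: countableP | exact/measurableC].
Qed.

Lemma shiftZD (B : Type) (i j : int) (x : int -> B) :
  shiftZ j (shiftZ i x) = shiftZ (i + j) x.
Proof. by apply: funext => n; rewrite /shiftZ addrA addrAC. Qed.

Lemma periodic_on_shiftZ (B : Type) (x : int -> B) (j i : int) (len q : nat) :
  periodic_on (shiftZ j x) i len q <-> periodic_on x (i + j) len q.
Proof.
by split=> xper n lt_n; have := xper n lt_n; rewrite /shiftZ !(addrAC _ j).
Qed.

Section ShiftSpace.
Variables (A A' : finType) (a0 : A) (b0 : A').
Local Notation Omega := (OmegaM a0 b0).

Lemma TshiftD (i j : int) (w : Omega) : Tshift j (Tshift i w) = Tshift (i + j) w.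
Proof. by rewrite /Tshift /= !shiftZD. Qed.

Lemma Tshift0 (w : Omega) : Tshift 0 w = w.
Proof.
by case: w => x x'; rewrite /Tshift /shiftZ /=; congr pair; apply: funext => n; rewrite addr0.
Qed.

Lemma measurable_coord1 (n : int) (a : A) : measurable [set w : Omega | w.1 n = a].
Proof. by apply: sub_sigma_algebra; left; exists n, a. Qed.

Lemma measurable_coord2 (n : int) (b : A') : measurable [set w : Omega | w.2 n = b].
Proof. by apply: sub_sigma_algebra; right; exists n, b. Qed.

Lemma measurable_Tshift (j : int) : measurable_fun setT (Tshift j : Omega -> Omega).
Proof.
apply: (@measurability _ _ Omega Omega setT _ (@cylinders A A' a0 b0)) => //.
move=> _ [_ [[n [a ->]]|[n [b ->]]] <-].
- by rewrite setTI; exact: (measurable_coord1 (n + j)).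
- by rewrite setTI; exact: (measurable_coord2 (n + j)).
Qed.

Lemma measurable_Tshift_preimage (j : int) (E : set Omega) :
  measurable E -> measurable (Tshift j @^-1` E).
Proof. by move=> mE; rewrite -[_ @^-1` _]setTI; exact: measurable_Tshift. Qed.

Lemma measurable_Tshift_orbit (L : set Omega) :
  measurable L -> measurable (\bigcup_(j : int) Tshift j @^-1` L).
Proof.
move=> mL; apply: countable_bigcupT_measurable => [|j]; first exact: countableP.
exact: measurable_Tshift_preimage.
Qed.

Lemma measurable_map_coord1 (l : seq int) (Q : seq A -> Prop) :
  measurable [set w : Omega | Q (map w.1 l)].
Proof.
elim: l Q => [|i l IH] Q /=.
  by have [Q0|nQ0] := pselect (Q [::]);
    [rewrite (_ : [set _ | _] = setT) | rewrite (_ : [set _ | _] = set0)];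
    rewrite ?predeqE.
rewrite (_ : [set _ | _] = \bigcup_(a : A)
    ([set w : Omega | w.1 i = a] `&` [set w : Omega | Q (a :: map w.1 l)])).
  apply: countable_bigcupT_measurable => [|a]; first exact: countableP.
  exact: measurableI (measurable_coord1 _ _) (IH (fun s => Q (a :: s))).
by rewrite predeqE => w; split=> [Qw|[a _ [<-]]] //; exists (w.1 i).
Qed.

Lemma measurable_periodic_on (i : int) (len q : nat) :
  measurable [set w : Omega | periodic_on w.1 i len q].
Proof.
rewrite (_ : [set _ | _] = \bigcap_(j in [set j | (j < len)%N])
    [set w : Omega | w.1 (i + j%:Z) = w.1 (i + j%:Z + q%:Z)]); last first.
  by rewrite predeqE => w; split=> xper j; apply: xper.
apply: bigcap_measurableType => j _.
rewrite (_ : [set _ | _] = \bigcup_(a : A) ([set w : Omega | w.1 (i + j%:Z) = a]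
    `&` [set w | w.1 (i + j%:Z + q%:Z) = a])).
  apply: countable_bigcupT_measurable => [|a]; first exact: countableP.
  exact: measurableI (measurable_coord1 _ _) (measurable_coord1 _ _).
by rewrite predeqE => w /=; split=> [eqw|[a _ [-> ->]]] //; exists (w.1 (i + j%:Z)).
Qed.

Lemma measurable_subshift_of (theta : A -> seq A) :
  measurable [set w : Omega | subshift_of theta w.1].
Proof.
rewrite (_ : [set _ | _] = \bigcap_(i : int) \bigcap_(len : nat)
    [set w : Omega | (fun s => exists (m : nat) (a : A), infix s (subst_iter theta m [:: a]))
       (map w.1 [seq i + j%:Z | j <- iota 0 len])]); last first.
  rewrite predeqE => w /=; split=> [Xw i _ len _ | Xw i len].
  - by rewrite /= -map_comp; exact: Xw.
  - by have := Xw i I len I; rewrite /= -map_comp.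
apply: (@countable_bigcapT_measurable _ _ int) => i.
apply: (@countable_bigcapT_measurable _ _ nat) => len.
exact: (measurable_map_coord1 _ (fun s =>
  exists (m : nat) (a : A), infix s (subst_iter theta m [:: a]))).
Qed.

Lemma measurable_periodic_subshift (p : nat) (y : int -> A') :
  measurable [set w : Omega | periodic_subshift p y w.2].
Proof.
rewrite (_ : [set _ | _] = \bigcup_(j : int) \bigcap_(n : int)
    [set w : Omega | w.2 n = y (n + j)]); last first.
  rewrite predeqE => -[x x'] /=; split=> [[j _ <-]|[j _ x'E]]; first by exists j.
  by exists j => //; apply: funext => n; rewrite /shiftZ -(x'E n I).
apply: countable_bigcupT_measurable => [|j]; first exact: countableP.
by apply: countable_bigcapT_measurable => n; exact: measurable_coord2.
Qed.

End ShiftSpace.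

Lemma ae_of_prob1 d (T : measurableType d) (R : realType) (P : probability T R)
    (S : set T) :
  measurable S -> P S = 1%E -> {ae P, forall w, S w}.
Proof.
move=> mS PS1; exists (~` S); split => //; first exact: measurableC.
by rewrite probability_setC // PS1 subee.
Qed.

Lemma lim_sup_set_ge d (T : measurableType d) (R : realType)
    (mu : {measure set T -> \bar R}) (F : (set T)^nat) (delta : \bar R) :
  (forall k, measurable (F k)) -> (mu (\bigcup_(k >= 0) F k) < +oo)%E ->
  (forall N, exists2 q, (N <= q)%N & (delta <= mu (F q))%E) ->
  (delta <= mu (lim_sup_set F))%E.
Proof.
move=> mF finF often; have cvgF := lim_sup_set_cvg mu F mF finF.
rewrite -(cvg_lim _ cvgF) //; apply: lime_ge; first by apply/cvg_ex; eexists; exact: cvgF.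
apply: nearW => n; have [q le_nq delta_q] := often n.
apply: (le_trans delta_q); apply: le_measure; rewrite ?inE //.
- by apply: bigcup_measurable => k _.
- by move=> w Fw; exists q.
Qed.

Section InvariantMeasure.
Variables (R : realType) (A A' : finType) (a0 : A) (b0 : A').
Local Notation Omega := (OmegaM a0 b0).
Variable rho : probability Omega R.
Hypothesis rho_inv : forall E : set Omega, measurable E ->
  rho (Tshift 1 @^-1` E) = rho E.

Lemma preimage_TshiftD (i j : int) (E : set Omega) :
  Tshift i @^-1` (Tshift j @^-1` E) = Tshift (i + j) @^-1` E.
Proof. by rewrite predeqE => w /=; rewrite TshiftD. Qed.

Lemma preimage_Tshift0 (E : set Omega) : Tshift 0 @^-1` E = E.
Proof. by rewrite predeqE => w /=; rewrite Tshift0. Qed.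

Lemma prob_Tshift (j : int) (E : set Omega) :
  measurable E -> rho (Tshift j @^-1` E) = rho E.
Proof.
have prob_Tshift_nat (n : nat) F : measurable F -> rho (Tshift n%:Z @^-1` F) = rho F.
  move=> mF; elim: n => [|n IH]; first by rewrite preimage_Tshift0.
  rewrite -add1n PoszD -preimage_TshiftD rho_inv ?IH //.
  exact: measurable_Tshift_preimage.
move=> mE; case: j => n; first exact: prob_Tshift_nat.
rewrite -(prob_Tshift_nat n.+1 _ (measurable_Tshift_preimage (Negz n) mE)).
by rewrite preimage_TshiftD NegzE addrN preimage_Tshift0.
Qed.

Lemma prob_ge_inv_of_cover (S B : set Omega) (T0 : nat) (s : nat -> int) :
  measurable S -> measurable B -> rho S = 1%E -> (0 < T0)%N ->
  S `<=` \big[setU/set0]_(t < T0) (Tshift (s t) @^-1` B) ->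
  ((T0%:R^-1 : R)%:E <= rho B)%E.
Proof.
move=> mS mB S1 T0_gt0 cover.
have mBs t : measurable (Tshift (s t) @^-1` B) by exact: measurable_Tshift_preimage.
have : (1 <= \sum_(t < T0) rho (Tshift (s t) @^-1` B))%E.
  apply: le_trans (Boole_inequality rho (fun t _ => mBs t)).
  rewrite -S1; apply: le_measure; rewrite ?inE //.
  by apply: bigsetU_measurable => t _.
have finB : rho B \is a fin_num.
  by rewrite ge0_fin_numE // (le_lt_trans (probability_le1 rho mB)) ?ltry.
under eq_bigr => t _ do rewrite prob_Tshift //.
rewrite -(fineK finB) sumEFin !lee_fin sumr_const card_ord => T0B.
by rewrite -[_^-1]mulr1 ler_pdivrMl ?ltr0n // mulr_natl.
Qed.

Hypothesis rho_ergodic : forall E : set Omega, measurable E ->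
  Tshift 1 @^-1` E = E -> rho E = 0%E \/ rho E = 1%E.

Lemma prob_Tshift_saturation (L : set Omega) :
  measurable L -> (0 < rho L)%E -> rho (\bigcup_(j : int) Tshift j @^-1` L) = 1%E.
Proof.
move=> mL L_gt0; set G := \bigcup_(j : int) _.
have mG : measurable G by exact: measurable_Tshift_orbit.
have G_inv : Tshift 1 @^-1` G = G.
  rewrite predeqE => w /=; split=> [[j _ Lw]|[j _ Lw]].
  - by exists (1 + j) => //=; rewrite -TshiftD.
  - by exists (j - 1) => //=; rewrite TshiftD addrC subrK.
have LG : (rho L <= rho G)%E.
  by apply: le_measure; rewrite ?inE // => w Lw; exists 0 => //=; rewrite Tshift0.
have [G0|//] := rho_ergodic mG G_inv.
by have := lt_le_trans L_gt0 LG; rewrite G0 ltxx.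
Qed.

Lemma ae_orbit_often (F : (set Omega)^nat) (delta : R) :
  (forall q, measurable (F q)) -> 0 < delta ->
  (forall N, exists2 q, (N <= q)%N & (delta%:E <= rho (F q))%E) ->
  {ae rho, forall w, exists j : int, forall N, exists2 q, (N <= q)%N & F q (Tshift j w)}.
Proof.
move=> mF delta_gt0 often.
have mL : measurable (lim_sup_set F).
  by apply: bigcapT_measurable => N; apply: bigcup_measurable => q _.
have L_gt0 : (0 < rho (lim_sup_set F))%E.
  apply: (@lt_le_trans _ _ delta%:E); first by rewrite lte_fin.
  apply: lim_sup_set_ge => //.
  by rewrite (le_lt_trans (probability_le1 _ _)) ?ltry //; exact: bigcup_measurable.
have G1 := prob_Tshift_saturation mL L_gt0.
apply: filterS (ae_of_prob1 (measurable_Tshift_orbit mL) G1) => w [j _ Lw].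
by exists j => N; have [q le_q Fq] := Lw N I; exists q.
Qed.

End InvariantMeasure.

(** * Words of a primitive substitution *)

Section SubstitutionWords.
Variables (A : finType) (theta : A -> seq A).
Local Notation th n w := (subst_iter theta n w).
Local Open Scope nat_scope.

Lemma subst_iter_cat n s t : th n (s ++ t) = th n s ++ th n t.
Proof.
elim: n => [|n IH] //=; rewrite IH.
by rewrite /subst_word map_cat flatten_cat.
Qed.

Lemma subst_iterD m n w : th (m + n) w = th m (th n w).
Proof. exact: iterD. Qed.

Lemma subst_iterC m n w : th m (th n w) = th n (th m w).
Proof. by rewrite -!subst_iterD addnC. Qed.

Lemma subst_iter_nil n : th n [::] = [::].
Proof. by elim: n => //= n ->. Qed.

Lemma subst_iter_flatten n w : th n w = flatten [seq th n [:: b] | b <- w].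
Proof. by elim: w => [|b w IH] /=; rewrite ?subst_iter_nil // -IH -subst_iter_cat. Qed.

Lemma infix_subst_iter n s t : infix s t -> infix (th n s) (th n t).
Proof.
move=> /infixP [s1 [s2 ->]]; apply/infixP; exists (th n s1), (th n s2).
by rewrite !subst_iter_cat.
Qed.

Lemma infix_subst_iter_mem n b w : b \in w -> infix (th n [:: b]) (th n w).
Proof. by rewrite -infix1s; exact: infix_subst_iter. Qed.

Definition max_image_size : nat := \max_(c : A) size (theta c).

Lemma size_subst_iter_le n w : size (th n w) <= max_image_size ^ n * size w.
Proof.
have size_subst_le s : size (subst_word theta s) <= max_image_size * size s.
  elim: s => [|c s IH]; first by rewrite muln0.
  rewrite /subst_word /= size_cat mulnS -/(subst_word theta s).
  by apply: leq_add IH; exact: (leq_bigmax c).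
elim: n => [|n IH] /=; first by rewrite expn0 mul1n.
apply: leq_trans (size_subst_le _) _; rewrite expnS -mulnA leq_mul2l IH orbT //.
Qed.

Hypothesis theta_sub : is_substitution theta.

Lemma size_subst_word_ge s : size s <= size (subst_word theta s).
Proof.
elim: s => [|c s IH] //; rewrite /subst_word /= size_cat -/(subst_word theta s).
by have := theta_sub c; lia.
Qed.

Lemma size_subst_iter_ge n w : size w <= size (th n w).
Proof. by elim: n => [|n IH] //=; apply: leq_trans IH (size_subst_word_ge _). Qed.

Hypothesis theta_prim : primitive theta.

Definition prim_exponent : nat := projT1 (cid theta_prim).

Lemma mem_subst_iter_prim (a b : A) : b \in th prim_exponent [:: a].
Proof. exact: (projT2 (cid theta_prim) a b). Qed.

Lemma mem_subst_iter_ge j (a b : A) : prim_exponent <= j -> b \in th j [:: a].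
Proof.
move=> le_j; rewrite -(subnK le_j) subst_iterD subst_iterC.
case def_w: (th (j - prim_exponent) [:: a]) => [|e w].
  by have := size_subst_iter_ge (j - prim_exponent) [:: a]; rewrite def_w.
apply: (mem_infix _ (mem_subst_iter_prim e b)).
by apply: infix_subst_iter_mem; rewrite inE eqxx.
Qed.

Lemma size_subst_iter_ltS w : (exists c, 1 < size (theta c)) -> 0 < size w ->
  size w < size (th prim_exponent.+1 w).
Proof.
move=> [c c_long] w_gt0.
have c_in : c \in th prim_exponent w.
  case: w w_gt0 => [|e w] // _; apply: (mem_infix _ (mem_subst_iter_prim e c)).
  by apply: infix_subst_iter_mem; rewrite inE eqxx.
have size_subst_gt (s : seq A) : c \in s -> size s < size (subst_word theta s).
  elim: s => [|d s IH] //; rewrite inE /subst_word /= size_cat -/(subst_word theta s).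
  case/orP=> [/eqP <-|/IH]; first by have := size_subst_word_ge s; lia.
  by have := theta_sub d; lia.
by apply: leq_trans (size_subst_gt _ c_in); rewrite ltnS size_subst_iter_ge.
Qed.

Lemma size_subst_iter_unbounded : (exists c, 1 < size (theta c)) ->
  forall M, exists n1, forall n (a : A), n1 <= n -> M <= size (th n [:: a]).
Proof.
move=> c_long M; exists (M * prim_exponent.+1) => n a le_n.
have grow t : t < size (th (t * prim_exponent.+1) [:: a]).
  elim: t => [|t IH] //; rewrite mulSn subst_iterD.
  have w_gt0 : 0 < size (th (t * prim_exponent.+1) [:: a]) by exact: leq_ltn_trans IH.
  exact: leq_ltn_trans IH (size_subst_iter_ltS c_long w_gt0).
rewrite -(subnK le_n) subst_iterD.
by apply: leq_trans (size_subst_iter_ge _ _); exact: ltnW.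
Qed.

Lemma primitive_nonexpanding_trivial :
  (forall c, size (theta c) <= 1) -> forall a b : A, a = b.
Proof.
move=> short a b.
have : size (th prim_exponent [:: a]) <= 1.
  apply: leq_trans (size_subst_iter_le _ _) _; rewrite muln1.
  have : max_image_size <= 1 by apply/bigmax_leqP => c _; exact: short.
  by move=> K1; elim: (prim_exponent) => // e IH; rewrite expnS (leq_mul K1 IH).
have := mem_subst_iter_prim a a; have := mem_subst_iter_prim a b.
by case: (th _ [:: a]) => [|e [|e' w]] //=; rewrite !inE => /eqP -> /eqP ->.
Qed.

End SubstitutionWords.

Lemma flatten_window_block (T : eqType) (L : nat) (ss : seq (seq T))
    (s win s' : seq T) :
  {in ss, forall b, (size b <= L)%N} -> flatten ss = s ++ win ++ s' ->
  (2 * L < size win)%N -> exists2 b, b \in ss & infix b win.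
Proof.
elim: ss s => [|b ss IH] s small E long_win.
  by have := congr1 size E; rewrite !size_cat /=; lia.
have small_ss : {in ss, forall c, (size c <= L)%N}.
  by move=> c c_in; apply: small; rewrite inE c_in orbT.
have small_b : (size b <= L)%N by apply: small; rewrite inE eqxx.
have [le_bs|lt_sb] := leqP (size b) (size s).
  move: E; rewrite /= -(cat_take_drop (size b) s) -catA.
  move/eqP; rewrite eqseq_cat ?size_takel // => /andP[_ /eqP E].
  by have [c c_in c_win] := IH _ small_ss E long_win; exists c; rewrite // inE c_in orbT.
set d := (size b - size s)%N.
have /eqP : b ++ flatten ss = (s ++ take d win) ++ (drop d win ++ s').
  by rewrite -catA [take d win ++ _]catA cat_take_drop -E.
rewrite eqseq_cat; last by rewrite size_cat size_takel /d; lia.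
case/andP=> _ /eqP; case: ss {IH small E} small_ss => [|c ss] small_ss /= E.
  by have := congr1 size E; rewrite /= size_cat size_drop /d; lia.
have small_c : (size c <= L)%N by apply: small_ss; rewrite inE eqxx.
exists c; first by rewrite !inE eqxx orbT.
apply: (infix_trans _ (infix_drop win d)); apply/prefixW; rewrite prefixE; apply/eqP.
transitivity (take (size c) (c ++ flatten ss)); last exact: take_size_cat.
by rewrite E takel_cat // size_drop /d; lia.
Qed.

Lemma wfactorD (B : finType) (x : int -> B) (i : int) (m n : nat) :
  wfactor x i (m + n) = wfactor x i m ++ wfactor x (i + m%:Z) n.
Proof.
rewrite /wfactor iotaD map_cat add0n -[in iota m n](addn0 m) iotaDl -map_comp.
by congr (_ ++ _); apply: eq_map => j /=; rewrite PoszD addrA.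
Qed.

Lemma size_wfactor (B : finType) (x : int -> B) (i : int) (n : nat) :
  size (wfactor x i n) = n.
Proof. by rewrite size_map size_iota. Qed.

Lemma wfactor_infix (B : finType) (x : int -> B) (W : nat) (w : seq B) :
  infix w (wfactor x 0 W) ->
  exists P : nat, (P + size w <= W)%N /\ wfactor x P%:Z (size w) = w.
Proof.
case/infixP=> [s [s' E]]; exists (size s).
have W_eq : W = (size s + size w + size s')%N.
  by have := congr1 size E; rewrite size_wfactor !size_cat addnA.
split; first by rewrite W_eq leq_addr.
move/eqP: E; rewrite W_eq !wfactorD -catA add0r.
rewrite eqseq_cat ?size_wfactor // => /andP[_].
by rewrite eqseq_cat ?size_wfactor // => /andP[/eqP].
Qed.

Section SubshiftWords.
Variables (A : finType) (theta : A -> seq A).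
Hypotheses (theta_sub : is_substitution theta) (theta_prim : primitive theta).
Local Notation th n w := (subst_iter theta n w).
Local Notation X := (subshift_of theta).
Local Notation K := (max_image_size theta).
Local Notation P := (prim_exponent theta_prim).
Local Open Scope nat_scope.

Lemma size_subst_iter_letter_le n (a e : A) :
  size (th n [:: e]) <= K ^ P * size (th n [:: a]).
Proof.
have e_in : infix (th n [:: e]) (th n (th P [:: a])).
  exact/infix_subst_iter_mem/mem_subst_iter_prim.
apply: leq_trans (size_subseq (infixW e_in)) _.
by rewrite subst_iterC; exact: size_subst_iter_le.
Qed.

Lemma subshift_window_block J x : X x ->
  exists e : A, infix (th J [:: e]) (wfactor x 0 (2 * \max_(c : A) size (th J [:: c]) + 1)).
Proof.
set W := 2 * _ + 1 => Xx.
have [m [b win_in]] := Xx 0%R W.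
have : infix (wfactor x 0 W) (th J (th (m + P) [:: b])).
  apply: (infix_trans win_in); rewrite -!subst_iterD addnA [J + m]addnC -addnA subst_iterD.
  exact/infix_subst_iter_mem/mem_subst_iter_ge/leq_addl.
rewrite subst_iter_flatten => /infixP[s [s' E]].
have small : {in [seq th J [:: c] | c <- th (m + P) [:: b]],
    forall bl, size bl <= \max_(c : A) size (th J [:: c])}.
  by move=> _ /mapP[c _ ->]; exact: (leq_bigmax c).
have long_win : 2 * \max_(c : A) size (th J [:: c]) < size (wfactor x 0 W).
  by rewrite size_wfactor /W; lia.
by have [_ /mapP[e _ ->] e_win] := flatten_window_block small E long_win; exists e.
Qed.

Lemma subshift_occurrence v : language X v ->
  exists C : nat, forall n (a : A) x, X x -> exists P0 : nat,
    P0 + size (th n v) <= 2 * (C * size (th n [:: a])) + 1 /\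
    wfactor x P0%:Z (size (th n v)) = th n v.
Proof.
case=> x0 Xx0 [i0 def_v]; have [m [b v_in]] := Xx0 i0 (size v); rewrite -def_v in v_in.
exists (K ^ (m + P) * K ^ P) => n a x Xx.
set J := n + (m + P); set Lmax := \max_(c : A) size (th J [:: c]).
have Lmax_le : Lmax <= K ^ (m + P) * K ^ P * size (th n [:: a]).
  apply/bigmax_leqP => e _; rewrite -mulnA /J addnC subst_iterD.
  apply: leq_trans (size_subst_iter_le _ _ _) _.
  by rewrite leq_mul2l size_subst_iter_letter_le orbT.
have [e e_win] := subshift_window_block J Xx.
have v_win : infix (th n v) (wfactor x 0 (2 * Lmax + 1)).
  apply: infix_trans e_win; rewrite /J subst_iterD; apply: infix_subst_iter.
  apply: (infix_trans v_in); rewrite subst_iterD.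
  exact/infix_subst_iter_mem/mem_subst_iter_prim.
have [P0 [P0_le wP0]] := wfactor_infix v_win.
exists P0; split => //; apply: leq_trans P0_le _.
by rewrite leq_add2r leq_mul2l Lmax_le orbT.
Qed.

End SubshiftWords.

Lemma periodic_on_of_wfactor (B : finType) (x : int -> B) (i : int) (w : seq B)
    (len q : nat) :
  wfactor x i (size w) = w -> size w = (len + q)%N -> drop q w = take len w ->
  periodic_on x i len q.
Proof.
move=> xw size_w border j lt_j.
have x_nth (k : nat) : (k < size w)%N -> x (i + k%:Z) = nth (x 0) w k.
  by move=> lt_k; rewrite -xw (nth_map 0) ?size_iota // nth_iota.
rewrite x_nth; last by lia.
rewrite -addrA -PoszD x_nth; last by lia.
by rewrite addnC -nth_drop border nth_take.
Qed.

Lemma take_addn_cat (T : Type) (s t : seq T) (n : nat) :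
  take (size s + n) (s ++ t) = s ++ take n t.
Proof. by rewrite take_cat ltnNge leq_addr /= addKn. Qed.

Lemma cube_border (T : Type) (U L R : seq T) : U = L ++ R ->
  drop (size U) (U ++ U ++ U ++ L) = take (2 * size U + size L)%N (U ++ U ++ U ++ L).
Proof.
move=> U_eq; rewrite drop_size_cat // mul2n -addnn -!addnA !take_addn_cat.
by congr (_ ++ (_ ++ _)); rewrite U_eq -catA take_size_cat.
Qed.

Section SubshiftCubes.
Variables (A : finType) (theta : A -> seq A).
Hypotheses (theta_sub : is_substitution theta) (theta_prim : primitive theta).
Local Notation th n w := (subst_iter theta n w).
Local Notation X := (subshift_of theta).
Local Open Scope nat_scope.

(* The occurrence of th^n(uuua) is q-periodic on a stretch of length
   2q + |th^n a|, so the grid of step |th^n a| - k meets a cube of length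
   2q + k within a bounded number of steps. *)
Lemma subshift_cubes (a : A) (u' : seq A) :
  language X ((a :: u') ++ (a :: u') ++ (a :: u') ++ [:: a]) ->
  exists T0 : nat, forall n k x, X x -> 2 * k < size (th n [:: a]) ->
    exists2 t, t < T0 & periodic_on x (t * (size (th n [:: a]) - k))%:Z
      (2 * size (th n (a :: u')) + k) (size (th n (a :: u'))).
Proof.
move=> uuua_X; have [C occ] := subshift_occurrence theta_sub theta_prim uuua_X.
exists (4 * C + 2) => n k x Xx.
set U := th n (a :: u'); set L := th n [:: a]; set h := size L - k => lt_k.
have [P0 [P0_le xw]] := occ n a x Xx.
have U_eq : U = L ++ th n u' by rewrite -subst_iter_cat.
have w_eq : th n ((a :: u') ++ (a :: u') ++ (a :: u') ++ [:: a]) = U ++ U ++ U ++ L.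
  by rewrite !subst_iter_cat.
rewrite w_eq in P0_le xw.
have per : periodic_on x P0 (2 * size U + size L) (size U).
  apply: periodic_on_of_wfactor xw _ (cube_border U_eq).
  by rewrite !size_cat; lia.
have h_gt0 : 0 < h by rewrite /h; lia.
have P0_lt : P0 < (4 * C + 1) * h.
  have : C * size L <= 2 * (C * h) by rewrite mulnCA leq_mul2l /h; lia.
  by move: P0_le; rewrite -/L !size_cat mulnDl -mulnA; lia.
set t := (P0 %/ h).+1; exists t.
  have : P0 %/ h < 4 * C + 1 by rewrite ltn_divLR.
  by rewrite /t; lia.
have lo : P0 < t * h by rewrite /t ltn_ceil.
have hi : t * h <= P0 + h by rewrite /t mulSn addnC leq_add2r leq_trunc_div.
by apply: periodic_on_sub per; lia.
Qed.

End SubshiftCubes.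

(** * Cubes in the potential *)

Section Language.
Variables (R : realType) (A : finType) (X : set (int -> A)).

Lemma language_take (v : seq A) (l : nat) : language X v -> language X (take l v).
Proof.
case=> x Xx [i def_v]; exists x => //; exists i.
by rewrite {1}def_v /wfactor -map_take take_iota size_take_min.
Qed.

Lemma index_gt3_language (u : seq A) : (3%:E < index_word R X u)%E ->
  exists a u', u = a :: u' /\ language X ((a :: u') ++ (a :: u') ++ (a :: u') ++ [:: a]).
Proof.
case/ereal_sup_gt=> _ [M uM_X <-]; rewrite lte_fin.
case: u uM_X => [|a u'] uM_X; first by rewrite /= invr0 mulr0 => ?; lra.
rewrite ltr_pdivlMr ?ltr0n // -natrM ltr_nat => lt_uM; rewrite /= in lt_uM.
exists a, u'; split => //; set u := a :: u'.
have -> : u ++ u ++ u ++ [:: a] = take (size u + (size u + (size u + 1))) (wpow u M).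
  rewrite /wpow take_takel; last by rewrite /=; lia.
  have -> : M = (4 + (M - 4))%N by lia.
  have -> : flatten (nseq (4 + (M - 4)) u) = u ++ u ++ u ++ u ++ flatten (nseq (M - 4) u).
    by [].
  by rewrite !take_addn_cat /u /= take0.
exact: language_take.
Qed.

End Language.

Lemma subshift_of_shiftZ (A : finType) (theta : A -> seq A) (j : int) (x : int -> A) :
  subshift_of theta x -> subshift_of theta (shiftZ j x).
Proof.
move=> Xx i len; have [m [a win_in]] := Xx (i + j) len; exists m, a.
by rewrite /wfactor (eq_map (g := fun n => x (i + j + n%:Z))) // => n; rewrite /shiftZ addrAC.
Qed.

Lemma periodic_subshift_shiftZ (B : Type) (p : nat) (y : int -> B) (j : int) (x : int -> B) :
  periodic_subshift p y x -> periodic_subshift p y (shiftZ j x).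
Proof. by case=> i _ <-; exists (i + j) => //; rewrite shiftZD. Qed.

Lemma periodic_subshift_shiftZ_dvd (B : Type) (p q : nat) (y : int -> B) (x : int -> B) :
  is_periodic p y -> periodic_subshift p y x -> (p %| q)%N -> shiftZ q%:Z x = x.
Proof.
case=> _ y_per [i _ <-] /dvdnP[r ->]; rewrite shiftZD addrC -shiftZD; congr shiftZ.
apply: funext => n; rewrite /shiftZ; elim: r => [|r IH]; first by rewrite addr0.
by rewrite mulSn PoszD addrA addrAC y_per IH.
Qed.

Lemma wfactor_shiftZ (A : finType) (x : int -> A) (j i : int) (k : nat) :
  wfactor (shiftZ j x) i k = wfactor x (i + j) k.
Proof. by apply: eq_map => n; rewrite /shiftZ addrAC. Qed.

Lemma wfactor_periodic_on (A : finType) (x : int -> A) (i : int) (len k q : nat) :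
  periodic_on x i (len + k) q -> forall j : nat, (j < len)%N ->
  wfactor x (i + j%:Z) k = wfactor x (i + j%:Z + q%:Z) k.
Proof.
move=> xper j lt_j; apply/eq_in_map => n; rewrite mem_iota add0n => /andP[_ lt_n].
have := xper (j + n)%N ltac:(lia); rewrite PoszD !addrA => ->.
by rewrite [in RHS]addrAC.
Qed.

Section CubeMeasure.
Variables (R : realType) (A A' : finType) (a0 : A) (b0 : A').
Local Notation Omega := (OmegaM a0 b0).
Variables (theta : A -> seq A) (rho : probability Omega R).
Hypotheses (theta_sub : is_substitution theta) (theta_prim : primitive theta).
Hypothesis rho_inv : forall E : set Omega, measurable E ->
  rho (Tshift 1 @^-1` E) = rho E.
Local Notation th n w := (subst_iter theta n w).
Local Notation X := (subshift_of theta).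

Definition cube_set (n0 : int) (k q : nat) : set Omega :=
  [set w | periodic_on w.1 (n0 - q%:Z) (2 * q + k)%N q].

Lemma measurable_cube_set n0 k q : measurable (cube_set n0 k q).
Proof. exact: measurable_periodic_on. Qed.

Lemma cube_set_prob_ge (S : set Omega) (n0 : int) (k p : nat) (a : A) (u' : seq A) :
  measurable S -> rho S = 1%E -> S `<=` [set w | X w.1] -> (0 < p)%N ->
  language X ((a :: u') ++ (a :: u') ++ (a :: u') ++ [:: a]) ->
  (forall N, exists n, (N <= n)%N /\ (p %| size (th n (a :: u')))%N) ->
  exists2 delta : R, 0 < delta & forall N, exists2 q, (N <= q)%N &
    (p %| q)%N /\ (delta%:E <= rho (cube_set n0 k q))%E.
Proof.
move=> mS S1 SX p_gt0 uuua_X p_dvd.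
have [long|short] := pselect (exists c, 1 < size (theta c))%N; last first.
  have one_letter : forall b c : A, b = c.
    apply: (primitive_nonexpanding_trivial theta_prim) => c.
    by rewrite leqNgt; apply/negP => c_long; apply: short; exists c.
  exists 1 => // N; exists (p * N.+1)%N; first exact: ltnW (leq_pmull _ p_gt0).
  split; first exact: dvdn_mulr.
  rewrite (_ : cube_set _ _ _ = setT) ?probability_setT //.
  by rewrite predeqE => w; split=> // _ j _.
have [T0 cubes] := subshift_cubes theta_sub theta_prim uuua_X.
exists (T0.+1%:R^-1); first by rewrite invr_gt0 ltr0n.
move=> N.
have [n1 big] := size_subst_iter_unbounded theta_sub theta_prim long (N + 2 * k + 1)%N.
have [n [le_n q_dvd]] := p_dvd n1.
set q := size (th n (a :: u')); set l := size (th n [:: a]).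
have l_big : (N + 2 * k + 1 <= l)%N := big n a le_n.
have l_le_q : (l <= q)%N.
  by rewrite /q /l -[a :: u']cat1s subst_iter_cat size_cat leq_addr.
exists q; [lia | split => //].
apply: (prob_ge_inv_of_cover rho_inv (s := fun t => (t * (l - k))%N%:Z - n0 + q%:Z)
  mS (measurable_cube_set n0 k q) S1 (ltn0Sn T0)) => w Sw.
have [t lt_t cube] := cubes n k w.1 (SX _ Sw) ltac:(lia).
apply: (bigsetU_sup (F := fun t => Tshift ((t * (l - k))%N%:Z - n0 + q%:Z) @^-1`
  cube_set n0 k q) (leqW lt_t)).
apply/periodic_on_shiftZ.
by rewrite [X in periodic_on _ X](_ : _ = (t * (l - k))%N%:Z) //; ring.
Qed.

End CubeMeasure.

Lemma cubes_no_eigenvalues (R : realType) (A A' : finType) (a0 : A) (b0 : A')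
    (theta : A -> seq A) (p : nat) (y : int -> A') (f : OmegaM a0 b0 -> R)
    (n0 : int) (k : nat) (g : seq A -> (int -> A') -> R) :
  is_periodic p y ->
  (forall x x', subshift_of theta x -> periodic_subshift p y x' ->
     f (x, x') = g (wfactor x n0 k) x') ->
  forall (w : OmegaM a0 b0) (j : int),
  subshift_of theta w.1 -> periodic_subshift p y w.2 ->
  (forall N, exists2 q, (N <= q)%N & (p %| q)%N /\ cube_set n0 k q (Tshift j w)) ->
  has_no_eigenvalues (fun t => f (Tshift t w)).
Proof.
move=> y_per f_loc w j Xw X'w cubes.
have loc m : f (Tshift m w) = g (wfactor w.1 (n0 + m) k) (shiftZ m w.2).
  rewrite -wfactor_shiftZ; apply: f_loc.
  - exact: subshift_of_shiftZ.
  - exact: periodic_subshift_shiftZ.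
apply: (gordon_no_eigenvalues (c := j)) => N.
have [q le_q [p_dvd /periodic_on_shiftZ cube]] := cubes N; exists q => // i lt_i.
rewrite !loc; congr g.
- have -> : n0 + (j - q%:Z + i%:Z) = n0 - q%:Z + j + i%:Z by ring.
  have -> : n0 + (j - q%:Z + i%:Z + q%:Z) = n0 - q%:Z + j + i%:Z + q%:Z by ring.
  by move: (wfactor_periodic_on cube lt_i) => ->.
- rewrite addrC -shiftZD (periodic_subshift_shiftZ_dvd y_per) //.
  exact: periodic_subshift_shiftZ.
Qed.

Unset Implicit Arguments.
Theorem proposition3p41 (R : realType) (A A' : finType) (a0 : A) (b0 : A')
  (theta : A -> seq A) (p : nat) (y : int -> A')
  (rho : probability (OmegaM a0 b0) R) (f : OmegaM a0 b0 -> R) :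
  is_substitution theta ->
  primitive theta ->
  is_periodic p y ->
  rho ((subshift_of theta `*` periodic_subshift p y) : set (OmegaM a0 b0)) = 1%E ->
  (forall E : set (OmegaM a0 b0), measurable E ->
     rho (Tshift 1 @^-1` E) = rho E) ->
  (forall E : set (OmegaM a0 b0), measurable E ->
     Tshift 1 @^-1` E = E -> rho E = 0%E \/ rho E = 1%E) ->
  (exists (n : int) (k : nat) (g : seq A -> (int -> A') -> R),
     forall (x : int -> A) (x' : int -> A'),
       subshift_of theta x -> periodic_subshift p y x' ->
       f (x, x') = g (wfactor x n k) x') ->
  (exists u : seq A,
     [/\ language (subshift_of theta) u,
         (3%:E < index_word R (subshift_of theta) u)%E &
         forall N : nat, exists n : nat,
           (N <= n)%N /\ (p %| size (subst_iter theta n u))%N]) ->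
  {ae rho, forall w : OmegaM a0 b0, has_no_eigenvalues (fun j : int => f (Tshift j w))}.
Proof.
move=> theta_sub theta_prim y_per XX1 rho_inv rho_erg [n0 [k [g f_loc]]] [u [_ u_ind u_dvd]].
set XX := (_ `*` _ : set (OmegaM a0 b0)) in XX1.
have mXX : measurable XX.
  exact: measurableI (measurable_subshift_of _) (measurable_periodic_subshift _ _).
have [a [u' [def_u uuua_X]]] := index_gt3_language u_ind; subst u.
have [p_gt0 _] := y_per.
have [delta delta_gt0 often] := cube_set_prob_ge theta_sub theta_prim rho_inv n0 k mXX XX1
  (fun w => @proj1 _ _) p_gt0 uuua_X u_dvd.
pose F : (set (OmegaM a0 b0))^nat := fun q =>
  if (p %| q)%N then cube_set n0 k q else set0.
have mF q : measurable (F q) by rewrite /F; case: ifP => _; [exact: measurable_cube_set|].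
have often_F N : exists2 q, (N <= q)%N & (delta%:E <= rho (F q))%E.
  by have [q le_q [p_q]] := often N; exists q; rewrite // /F p_q.
apply: filterS2 (ae_orbit_often rho_erg mF delta_gt0 often_F) (ae_of_prob1 mXX XX1).
move=> w [j F_often] [Xw X'w].
apply: (cubes_no_eigenvalues y_per f_loc Xw X'w (j := j)) => N.
by have [q le_q] := F_often N; rewrite /F; case: ifP => // p_q cube; exists q.
Qed.
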